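(* Let $G_m$ be a parametric regulatory network, $R$ a well-formed set of influence constraints, $v\in V$ and $P\in\mathbb P(G_m)$. Then $P\in\mathcal P_{(u,v,s)}$ for every $(u,v,s)\in R$ with $s\in\{-1,+1\}$ if and only if for all $\omega,\omega'\in\Omega_v$, $\omega\preceq_v\omega'$ implies $P_{v,\omega}\le P_{v,\omega'}$.
   Context: An influence graph is $G=(V,I)$, $V=\{1,\dots,n\}$, $I\subseteq V\times V$; regulators $n^-(v)=\{u\mid(u,v)\in I\}$. $m\in\mathbb N^n$, $D_v=\{0,\dots,m_v\}$, PRN $G_m=(G,m)$. Regulator states $\Omega_v=\prod_{u\in n^-(v)}D_u$; $\omega[u\leftarrow k]$ replaces component $u$ of $\omega$ by $k$. Parametrisations: vectors $P\in\mathbb P(G_m)$ with coordinates $P_{v,\omega}\in D_v$ for each $v\in V$, $\omega\in\Omega_v$. $R\subseteq V\times V\times\{+1,-1,\mathrm o\}$ is well-formed if $u\in n^-(v)$ for all $(u,v,c)\in R$ and never both $(u,v,+1),(u,v,-1)\in R$. $\mathcal P_{(u,v,+1)}=\{P\mid\forall\omega\in\Omega_v\forall x_u\in\{1..m_u\}:P_{v,\omega[u\leftarrow x_u]}\ge P_{v,\omega[u\leftarrow x_u-1]}\}$ and $\mathcal P_{(u,v,-1)}$ likewise with $\le$. The monotonicity order $\preceq_v$ on $\Omega_v$: $\omega\preceq_v\omega'$ iff for all $u\in n^-(v)$, $\omega_u\le\omega'_u$ if $(u,v,+1)\in R$, $\omega_u\ge\omega'_u$ if $(u,v,-1)\in R$,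 and $\omega_u=\omega'_u$ otherwise. *)

From mathcomp Require Import all_boot.
Set Implicit Arguments. Unset Strict Implicit. Unset Printing Implicit Defensive.

(* Vertices V = {1..n} are represented by 'I_n (0-indexed).
   An influence graph is I : rel 'I_n, with I u v meaning (u,v) \in I.
   m : 'I_n -> nat gives the maxima, D_v = {0..m v}. *)

Inductive sign := Pos | Neg | Obs.

Definition regulators (n : nat) (I : rel 'I_n) (v : 'I_n) : pred 'I_n :=
  fun u => I u v.

(* Regulator states Omega_v = prod_{u in n^-(v)} D_u, encoded as functions
   w : 'I_n -> nat with w u \in D_u on regulators and w u = 0 elsewhere
   (a canonical representative, making the encoding bijective). *)
Definition is_state (n : nat) (I : rel 'I_n) (m : 'I_n -> nat) (v : 'I_n)
  (w : 'I_n -> nat) : Prop :=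
  forall u, (regulators I v u -> w u <= m u) /\ (~~ regulators I v u -> w u = 0).

Definition upd (n : nat) (w : 'I_n -> nat) (u : 'I_n) (k : nat) : 'I_n -> nat :=
  fun x => if x == u then k else w x.

(* Parametrisations: P v w is the coordinate P_{v,w}; only its values on
   regulator states matter.  Membership in P(G_m): values lie in D_v. *)
Definition is_param (n : nat) (I : rel 'I_n) (m : 'I_n -> nat)
  (P : 'I_n -> ('I_n -> nat) -> nat) : Prop :=
  forall v w, is_state I m v w -> P v w <= m v.

Definition well_formed (n : nat) (I : rel 'I_n) (R : 'I_n -> 'I_n -> sign -> bool) : Prop :=
  (forall u v c, R u v c -> I u v) /\ (forall u v, ~ (R u v Pos /\ R u v Neg)).

Definition in_constr (n : nat) (I : rel 'I_n) (m : 'I_n -> nat)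
  (P : 'I_n -> ('I_n -> nat) -> nat) (u v : 'I_n) (s : sign) : Prop :=
  forall w, is_state I m v w ->
  forall x, 1 <= x <= m u ->
    match s with
    | Pos => P v (upd w u (x.-1)) <= P v (upd w u x)
    | Neg => P v (upd w u x) <= P v (upd w u (x.-1))
    | Obs => true
    end.

Definition mono_le (n : nat) (I : rel 'I_n) (R : 'I_n -> 'I_n -> sign -> bool)
  (v : 'I_n) (w w' : 'I_n -> nat) : Prop :=
  forall u, regulators I v u ->
    (R u v Pos -> w u <= w' u) /\
    (R u v Neg -> w' u <= w u) /\
    (~~ R u v Pos -> ~~ R u v Neg -> w u = w' u).

From mathcomp Require Import all_boot.
From mathcomp Require Import zify.
From Stdlib Require Import FunctionalExtensionality.

Set Implicit Arguments.
Unset Strict Implicit.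
Unset Printing Implicit Defensive.

(* A unit change of one regulator in the direction prescribed by its sign
   constraint is exactly the comparison required by that constraint, and
   such a pair is ⪯_v-comparable; this gives monotonicity => constraints.
   Conversely, if ω ⪯_v ω' and ω ≠ ω', some constrained regulator differs,
   and moving it one unit towards ω' does not decrease P, keeps the state
   ⪯_v ω' and strictly decreases the ℓ1-distance to ω'; induction on that
   distance gives constraints => monotonicity. *)

Definition state_dist {n : nat} (w w' : 'I_n -> nat) : nat :=
  \sum_(x < n) ((w x - w' x) + (w' x - w x)).

Lemma upd_id (n : nat) (w : 'I_n -> nat) u : upd w u (w u) = w.
Proof. by apply: functional_extensionality => x; rewrite /upd; case: eqP => // ->. Qed.

Lemma state_dist_upd (n : nat) (w w' : 'I_n -> nat) u k :
  (k - w' u) + (w' u - k) < (w u - w' u) + (w' u - w u) ->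
  state_dist (upd w u k) w' < state_dist w w'.
Proof.
move=> lt_u; rewrite /state_dist (bigD1 u) //= [X in _ < X](bigD1 u) //=.
rewrite {1 2}/upd eqxx -addSn leq_add //.
by apply: leq_sum => x /negbTE ne_xu; rewrite /upd ne_xu.
Qed.

Section Monotonicity.

Variables (n : nat) (I : rel 'I_n) (m : 'I_n -> nat).
Variables (R : 'I_n -> 'I_n -> sign -> bool) (v : 'I_n).
Hypothesis wfR : well_formed I R.

Lemma state_le_max w u : is_state I m v w -> I u v -> w u <= m u.
Proof. by move=> Hw Iu; case: (Hw u) => /(_ Iu). Qed.

Lemma state_neq_regulator w w' u :
  is_state I m v w -> is_state I m v w' -> w u != w' u -> I u v.
Proof.
move=> Hw Hw' ne_u; apply/negPn/negP => nIu.
by case: (Hw u) (Hw' u) ne_u => _ /(_ nIu) -> [_ /(_ nIu) ->].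
Qed.

Lemma upd_state w u k :
  is_state I m v w -> I u v -> k <= m u -> is_state I m v (upd w u k).
Proof.
move=> Hw Iu le_km x; rewrite /upd; case: eqP => [->|_]; last exact: Hw.
by split=> // /negP; rewrite /regulators Iu.
Qed.

Definition mono_le_at (u : 'I_n) (a b : nat) : Prop :=
  (R u v Pos -> a <= b) /\ (R u v Neg -> b <= a) /\
  (~~ R u v Pos -> ~~ R u v Neg -> a = b).

Lemma mono_le_at_refl u a : mono_le_at u a a.
Proof. by []. Qed.

Lemma mono_le_atP u a b : R u v Pos -> a <= b -> mono_le_at u a b.
Proof.
move=> RP le_ab; split=> [_|]; first exact: le_ab.
by split=> [RN|]; [case: (wfR.2 u v) | rewrite RP].
Qed.

Lemma mono_le_atN u a b : R u v Neg -> b <= a -> mono_le_at u a b.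
Proof.
move=> RN le_ba; split=> [RP|]; first by case: (wfR.2 u v).
by split=> [_|]; [exact: le_ba | rewrite RN].
Qed.

Lemma mono_le_upd w w' u k :
  mono_le I R v w w' -> mono_le_at u k (w' u) -> mono_le I R v (upd w u k) w'.
Proof.
by move=> le_ww' le_k x Ix; rewrite /upd; case: eqP => [->|_]; last exact: le_ww'.
Qed.

Lemma mono_le_upd2 w u a b :
  mono_le_at u a b -> mono_le I R v (upd w u a) (upd w u b).
Proof.
by move=> le_ab x _; rewrite /upd; case: eqP => [->|_]; last exact: mono_le_at_refl.
Qed.

Variable P : 'I_n -> ('I_n -> nat) -> nat.

Lemma in_constr_Pos_step u w :
  in_constr I m P u v Pos -> is_state I m v w -> w u < m u ->
  P v w <= P v (upd w u (w u).+1).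
Proof. by move=> HP Hw lt_um; have := HP w Hw (w u).+1 lt_um; rewrite /= upd_id. Qed.

Lemma in_constr_Neg_step u w :
  in_constr I m P u v Neg -> is_state I m v w -> I u v -> 0 < w u ->
  P v w <= P v (upd w u (w u).-1).
Proof.
move=> HN Hw Iu gt0_u.
by have := HN w Hw (w u); rewrite gt0_u state_le_max //= upd_id; apply.
Qed.

Definition satisfies_constraints : Prop :=
  forall u s, s <> Obs -> R u v s -> in_constr I m P u v s.

Definition monotone_param : Prop :=
  forall w w', is_state I m v w -> is_state I m v w' ->
    mono_le I R v w w' -> P v w <= P v w'.

Lemma constraint_step w w' u :
  satisfies_constraints -> is_state I m v w -> is_state I m v w' ->
  mono_le I R v w w' -> w u != w' u ->
  exists w1, [/\ is_state I m v w1, mono_le I R v w1 w', P v w <= P v w1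
               & state_dist w1 w' < state_dist w w'].
Proof.
move=> HR Hw Hw' le_ww' ne_u.
have Iu := state_neq_regulator Hw Hw' ne_u.
have [le_P [le_N eq_O]] := le_ww' u Iu.
case RP: (R u v Pos).
  have lt_u : w u < w' u by rewrite ltn_neqAle ne_u le_P.
  have lt_um : w u < m u := leq_trans lt_u (state_le_max Hw' Iu).
  exists (upd w u (w u).+1); split.
  - exact: upd_state.
  - by apply: mono_le_upd => //; apply: mono_le_atP.
  - exact: in_constr_Pos_step (HR u Pos _ RP) Hw lt_um.
  - by apply: state_dist_upd; lia.
case RN: (R u v Neg); last by move: ne_u; rewrite eq_O ?RP ?RN ?eqxx.
have lt_u : w' u < w u by rewrite ltn_neqAle eq_sym ne_u le_N.
exists (upd w u (w u).-1); split.
- by apply: upd_state => //; rewrite (leq_trans (leq_pred _)) ?state_le_max.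
- by apply: mono_le_upd => //; apply: mono_le_atN => //; lia.
- by apply: in_constr_Neg_step (HR u Neg _ RN) Hw Iu _ => //; lia.
- by apply: state_dist_upd; lia.
Qed.

Lemma constraints_monotone : satisfies_constraints -> monotone_param.
Proof.
move=> HR w w' Hw Hw'.
suff: forall k w, state_dist w w' < k -> is_state I m v w ->
        mono_le I R v w w' -> P v w <= P v w' by apply.
elim=> // k IH {}w lt_dk {}Hw le_ww'.
case: (boolP [forall x, w x == w' x]) => [/forallP eq_ww'|].
  by have -> : w = w' by apply: functional_extensionality => x; apply/eqP.
rewrite negb_forall => /existsP [u ne_u].
have [w1 [Hw1 le_w1w' le_Pw1 lt_d1]] := constraint_step HR Hw Hw' le_ww' ne_u.
by apply: leq_trans le_Pw1 (IH w1 _ Hw1 le_w1w'); apply: leq_trans lt_d1 _.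
Qed.

Lemma monotone_constraints : monotone_param -> satisfies_constraints.
Proof.
move=> Hmono u s _ Rs w Hw x /andP [ge1_x le_xm].
have Iu := wfR.1 _ _ _ Rs.
have Hx1 : is_state I m v (upd w u x.-1).
  by apply: upd_state => //; apply: leq_trans (leq_pred x) le_xm.
have Hx : is_state I m v (upd w u x) by apply: upd_state.
case: s Rs => Rs //=; apply: Hmono => //; apply: mono_le_upd2.
- exact: mono_le_atP Rs (leq_pred x).
- exact: mono_le_atN Rs (leq_pred x).
Qed.

End Monotonicity.

Theorem lemma1 (n : nat) (I : rel 'I_n) (m : 'I_n -> nat)
  (R : 'I_n -> 'I_n -> sign -> bool) (v : 'I_n)
  (P : 'I_n -> ('I_n -> nat) -> nat) :
  well_formed I R -> is_param I m P ->
  ((forall u s, s <> Obs -> R u v s -> in_constr I m P u v s) <->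
   (forall w w', is_state I m v w -> is_state I m v w' ->
      mono_le I R v w w' -> P v w <= P v w')).
Proof.
move=> wfR _; split; first exact: constraints_monotone.
exact: monotone_constraints.
Qed.
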